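(* Let $\mathcal{A}$ be a Banach algebra such that $\mathrm{rad}(\mathcal{A})=\mathrm{rann}(\mathcal{A})$ and $\mathcal{A}/\mathrm{rad}(\mathcal{A})$ is commutative, and suppose $\mathcal{A}$ has a right identity. Let $(\delta,d)$ be a generalized derivation of $\mathcal{A}$. Then the following are equivalent: (i) $\delta$ is skew centralizing; (ii) for every $k\in\mathbb{N}$, $\delta$ is $k$-skew centralizing; (iii) there exists $k\in\mathbb{N}$ such that $\delta$ is $k$-skew centralizing.
   Context: $\mathrm{rad}(\mathcal{A})$ is the Jacobson radical and $\mathrm{rann}(\mathcal{A})=\{c\in\mathcal{A}: ac=0\ \forall a\in\mathcal{A}\}$. A derivation is a linear map $d$ with $d(ab)=d(a)b+ad(b)$; a generalized derivation $(\delta,d)$ consists of a derivation $d$ and linear $\delta$ with $\delta(ab)=a\delta(b)+d(a)b$. $Z(\mathcal{A})$ is the center; $\langle a,b\rangle=ab+ba$. $T$ is $k$-skew centralizing if $\langle T(a),a^k\rangle\in Z(\mathcal{A})$ for all $a$; skew centralizing means $1$-skew centralizing. *)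

From mathcomp Require Import all_boot all_algebra.
From mathcomp Require Import complex.
From mathcomp Require Import all_classical all_reals all_analysis.
Set Implicit Arguments.
Unset Strict Implicit.
Unset Printing Implicit Defensive.
Import GRing.Theory Num.Theory.
Local Open Scope ring_scope.

Section BanachAlgebra.
Variables (K : numFieldType) (V : normedModType K) (mul : V -> V -> V).

(* Banach algebra axioms: associative, K-bilinear multiplication with a
   submultiplicative norm.  Completeness of V is imposed by taking
   V : completeNormedModType in the theorem. *)
Definition banach_algebra_mul : Prop :=
  (forall x y z, mul (mul x y) z = mul x (mul y z)) /\
  (forall x y z, mul (x + y) z = mul x z + mul y z) /\
  (forall x y z, mul x (y + z) = mul x y + mul x z) /\
  (forall (c : K) x y, mul (c *: x) y = c *: mul x y) /\
  (forall (c : K) x y, mul x (c *: y) = c *: mul x y) /\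
  (forall x y, `|mul x y| <= `|x| * `|y|).

(* left quasi-regularity: x has a left quasi-inverse c, i.e. c o x = 0 where
   c o x = c + x - c x. *)
Definition left_quasi_regular (x : V) : Prop :=
  exists c : V, c + x - mul c x = 0.

(* Jacobson radical (Jacobson's characterisation for non-unital algebras):
   rad(A) = { a | for all b, b a is left quasi-regular }. *)
Definition jacobson_rad : set V :=
  [set a | forall b : V, left_quasi_regular (mul b a)].

Definition rann : set V := [set c | forall a : V, mul a c = 0].

Definition center : set V := [set z | forall a : V, mul z a = mul a z].

(* A / rad(A) commutative: ab - ba in rad(A) for all a, b. *)
Definition quotient_rad_commutative : Prop :=
  forall a b : V, jacobson_rad (mul a b - mul b a).

Definition has_right_identity : Prop :=
  exists e : V, forall a : V, mul a e = a.

Definition derivation (d : V -> V) : Prop :=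
  linear d /\ forall a b, d (mul a b) = mul (d a) b + mul a (d b).

Definition generalized_derivation (delta d : V -> V) : Prop :=
  derivation d /\ linear delta /\
  forall a b, delta (mul a b) = mul a (delta b) + mul (d a) b.

Definition anticomm (a b : V) : V := mul a b + mul b a.

(* apow a n = a^(n+1) (the algebra need not be unital, so a^0 is avoided) *)
Fixpoint apow (a : V) (n : nat) : V :=
  match n with
  | 0 => a
  | n'.+1 => mul (apow a n') a
  end.

(* T is k-skew centralizing (k >= 1): <T(a), a^k> in Z(A) for all a. *)
Definition k_skew_centralizing (T : V -> V) (k : nat) : Prop :=
  forall a : V, center (anticomm (T a) (apow a k.-1)).

Definition skew_centralizing (T : V -> V) : Prop := k_skew_centralizing T 1.

End BanachAlgebra.

From Pilot Require Import Defs.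
From mathcomp Require Import all_boot all_algebra.
From mathcomp Require Import complex.
From mathcomp Require Import all_classical all_reals all_analysis.
Import GRing.Theory Num.Theory.
Local Open Scope ring_scope.
Local Open Scope complex_scope.
Set Implicit Arguments.
Unset Strict Implicit.
Unset Printing Implicit Defensive.

(* Since rad = rann and A/rad is commutative, every commutator lies in the right
   annihilator: c(xy) = c(yx).  Hence the center is stable under right
   multiplication, and <x, a^k> = <x, a> a^(k-1) gives (i) => (ii).
   For (iii) => (i), the hypothesis at the right identity e shows that
   w = delta(e) is central and d(e) = 0, so delta(a) = a w + d(a) and only
   <d(a), a> remains.  Replacing a by a + t e turns <d(a), a> a^(k-1) into a
   polynomial in t with central values, whose leading coefficients
   d(a) + e d(a) and (a - e a) d(a) are therefore central; and
   <d(a), a> = (d(a) + e d(a)) a + (a - e a) d(a). *)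

Section PolynomialFunctions.
Variables (K : numFieldType) (V : lmodType K).
Implicit Types (f g h : K -> V) (l : V).

(* [polyfun n f l]: [f] is a polynomial function of degree at most [n] whose
   coefficient of [t ^+ n] is [l], given in Horner form
   [f t = c0 + t *: (c1 + t *: (... + t *: l))]. *)
Fixpoint polyfun n f l : Prop :=
  if n is n'.+1 then exists c0 g, polyfun n' g l /\ forall t, f t = c0 + t *: g t
  else forall t, f t = l.

Lemma eq_polyfun n f g l : f =1 g -> polyfun n f l -> polyfun n g l.
Proof.
case: n => [|n] /= fg; first by move=> fl t; rewrite -fg fl.
by move=> [c0 [h [hl fE]]]; exists c0, h; split=> // t; rewrite -fg fE.
Qed.

Lemma polyfunS n f l : polyfun n f l -> polyfun n.+1 f 0.
Proof.
elim: n f l => [|n IHn] f l /=.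
  by move=> fl; exists l, (fun=> 0); split=> // t; rewrite fl scaler0 addr0.
by move=> [c0 [g [gl fE]]]; exists c0, g; split=> //; apply: IHn gl.
Qed.

Lemma polyfunD n f g l1 l2 :
  polyfun n f l1 -> polyfun n g l2 -> polyfun n (f \+ g) (l1 + l2).
Proof.
elim: n f g l1 l2 => [|n IHn] f g l1 l2 /=; first by move=> fl gl t; rewrite fl gl.
move=> [c0 [f' [fl fE]]] [c1 [g' [gl gE]]].
exists (c0 + c1), (f' \+ g'); split; first exact: IHn.
by move=> t; rewrite fE gE scalerDr addrACA.
Qed.

Lemma polyfun_addc n c f l :
  polyfun n.+1 f l -> polyfun n.+1 (fun t => c + f t) l.
Proof.
by move=> [c0 [g [gl fE]]]; exists (c + c0), g; split=> // t; rewrite fE addrA.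
Qed.

Lemma polyfun_mulX n f l : polyfun n f l -> polyfun n.+1 (fun t => t *: f t) l.
Proof. by move=> fl; exists 0, f; split=> // t; rewrite add0r. Qed.

Lemma polyfun_shift n f l : polyfun n f l -> polyfun n (fun t => f (t + 1)) l.
Proof.
elim: n f l => [|n IHn] f l; first by move=> /= fl t; rewrite fl.
move=> [c0 [g [gl fE]]].
have := polyfun_addc c0 (polyfunD (polyfun_mulX (IHn _ _ gl)) (polyfunS (IHn _ _ gl))).
by rewrite addr0; apply: eq_polyfun => t; rewrite fE scalerDl scale1r.
Qed.

Lemma polyfun_diff n f l :
  polyfun n.+1 f l -> polyfun n (fun t => f (t + 1) - f t) (l *+ n.+1).
Proof.
elim: n f l => [|n IHn] f l [c0 [g [gl fE]]].
  move=> t; rewrite !fE !gl scalerDl scale1r opprD addrACA subrr add0r.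
  by rewrite addrAC subrr add0r.
have := polyfunD (polyfun_shift (n := n.+1) gl) (polyfun_mulX (IHn _ _ gl)).
rewrite -mulrS; apply: eq_polyfun => t /=.
rewrite !fE scalerDl scale1r scalerBr opprD addrACA subrr add0r.
by rewrite [in RHS](addrC (t *: g (t + 1))) -addrA.
Qed.

(* The [n]-th finite difference of [f] is the constant [l *+ n`!]. *)
Lemma polyfun_lead_closed (S : V -> Prop) n f l :
  (forall x y, S x -> S y -> S (x - y)) -> (forall (c : K) x, S x -> S (c *: x)) ->
  polyfun n f l -> (forall t, S (f t)) -> S l.
Proof.
move=> SB SZ; elim: n f l => [|n IHn] f l fl fS; first by rewrite -(fl 0).
have /(SZ n.+1%:R^-1) := IHn _ _ (polyfun_diff fl) (fun t => SB _ _ (fS (t + 1)) (fS t)).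
by rewrite -scaler_nat scalerA mulVf ?pnatr_eq0 // scale1r.
Qed.

Lemma polyfun_linear_step n (M : V -> V) h l : linear M ->
  polyfun n h l -> polyfun n.+1 (fun t => M (h t) + t *: h t) l.
Proof.
move=> /GRing.semilinear_linear [MZ MD]; elim: n h l => [|n IHn] h l.
  by move=> /= hl; exists (M l), (fun=> l); split=> // t; rewrite hl.
move=> [c0 [g [gl hE]]].
exists (M c0), (fun t => c0 + (M (g t) + t *: g t)); split.
  exact: polyfun_addc (IHn _ _ gl).
by move=> t; rewrite hE MD MZ /= -addrA !scalerDr; congr (_ + _); apply: addrCA.
Qed.

Lemma polyfun_iter_linear j n (M : V -> V) h l : linear M ->
  polyfun n h l -> polyfun (j + n) (fun t => iter j (fun x => M x + t *: x) (h t)) l.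
Proof.
move=> linM hl; elim: j => [|j IHj] //=.
exact: polyfun_linear_step linM IHj.
Qed.

End PolynomialFunctions.

Section SkewCentralizing.
Variables (K : numFieldType) (V : normedModType K) (mul : V -> V -> V).
Local Notation "x ** y" := (mul x y) (at level 40, left associativity).
Local Notation central := (Defs.center mul).
Local Notation "<< x , y >>" := (anticomm mul x y).

Hypotheses (mulA : forall x y z, x ** y ** z = x ** (y ** z))
  (mulDl : forall x y z, (x + y) ** z = x ** z + y ** z)
  (mulDr : forall x y z, x ** (y + z) = x ** y + x ** z)
  (mulZl : forall (c : K) x y, (c *: x) ** y = c *: (x ** y))
  (mulZr : forall (c : K) x y, x ** (c *: y) = c *: (x ** y)).

Lemma mulBl x y z : (x - y) ** z = x ** z - y ** z.
Proof. by rewrite mulDl -scaleN1r mulZl scaleN1r. Qed.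

Lemma mulBr x y z : x ** (y - z) = x ** y - x ** z.
Proof. by rewrite mulDr -scaleN1r mulZr scaleN1r. Qed.

Lemma mul_swap_of_rad_rann :
  (forall x, jacobson_rad mul x <-> rann mul x) -> quotient_rad_commutative mul ->
  forall c x y, c ** (x ** y) = c ** (y ** x).
Proof.
move=> rad_rann comm_rad c x y.
by apply/eqP; rewrite -subr_eq0 -mulBr; apply/eqP/(rad_rann _).1/comm_rad.
Qed.

Lemma centerD x y : central x -> central y -> central (x + y).
Proof. by move=> cx cy a; rewrite mulDl mulDr cx cy. Qed.

Lemma centerB x y : central x -> central y -> central (x - y).
Proof. by move=> cx cy a; rewrite mulBl mulBr cx cy. Qed.

Lemma centerZ (c : K) x : central x -> central (c *: x).
Proof. by move=> cx a; rewrite mulZl mulZr cx. Qed.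

Lemma iter_mulB j a x y :
  iter j (mul^~ a) (x - y) = iter j (mul^~ a) x - iter j (mul^~ a) y.
Proof. by elim: j => [|j IHj] //=; rewrite IHj mulBl. Qed.

Hypothesis mul_swap : forall c x y, c ** (x ** y) = c ** (y ** x).

Lemma centerMr z y : central z -> central (z ** y).
Proof. by move=> cz a; rewrite mulA mul_swap -mulA cz mulA. Qed.

Lemma center_iter j a z : central z -> central (iter j (mul^~ a) z).
Proof. by move=> cz; elim: j => [|j IHj] //=; apply: centerMr. Qed.

Lemma anticomm_apow x a j : << x, apow mul a j >> = iter j (mul^~ a) << x, a >>.
Proof.
elim: j => [|j IHj] //=; rewrite -IHj /anticomm mulDl -mulA; congr (_ + _).
by rewrite !mulA mul_swap.
Qed.

Lemma k_skew_centralizingE T k :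
  k_skew_centralizing mul T k.+1 <-> forall a, central (iter k (mul^~ a) << T a, a >>).
Proof. by split=> skewT a; have := skewT a; rewrite anticomm_apow. Qed.

Lemma k_skew_centralizing_of_skew T k :
  skew_centralizing mul T -> k_skew_centralizing mul T k.+1.
Proof. by move=> skewT; apply/k_skew_centralizingE => a; apply/center_iter/skewT. Qed.

Variables (e : V) (mulr_e : forall x, x ** e = x).

Lemma polyfun_iter_mul_shift j n a h l : polyfun n h l ->
  polyfun (j + n) (fun t => iter j (mul^~ (a + t *: e)) (h t)) l.
Proof.
have linRa : linear (mul^~ a) by move=> c x y; rewrite mulDl mulZl.
move=> /(polyfun_iter_linear j linRa); apply: eq_polyfun => t.
by apply: eq_iter => x; rewrite mulDr mulZr mulr_e.
Qed.

Lemma center_lead_iter_mul_shift j n a h l : polyfun n h l ->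
  (forall t, central (iter j (mul^~ (a + t *: e)) (h t))) -> central l.
Proof.
by move=> /(polyfun_iter_mul_shift j a); apply: polyfun_lead_closed centerB centerZ.
Qed.

Section LinearVanishingAtIdentity.
Variables (D : V -> V) (linD : linear D) (De : D e = 0).

Lemma anticomm_shift a (t : K) :
  << D (a + t *: e), a + t *: e >> = << D a, a >> + t *: (D a + e ** D a).
Proof.
have [DZ DD] := GRing.semilinear_linear linD.
rewrite /anticomm DD DZ /= De scaler0 addr0 mulDr mulDl mulZr mulZl mulr_e.
by rewrite scalerDr addrACA.
Qed.

Lemma anticomm_split a :
  << D a, a >> = (D a + e ** D a) ** a + (a - e ** a) ** D a.
Proof.
by rewrite /anticomm mulDl mulBl mulA mul_swap -mulA addrACA subrr addr0.
Qed.

Lemma anticomm_split_rest_shift a (t : K) :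
  (a + t *: e - e ** (a + t *: e)) ** D (a + t *: e) = (a - e ** a) ** D a.
Proof.
have [DZ DD] := GRing.semilinear_linear linD.
by rewrite DD DZ /= De scaler0 addr0 mulDr mulZr mulr_e opprD addrACA subrr addr0.
Qed.

(* With [b = a + t *: e], the hypothesis at [b] is a polynomial in [t] of degree
   [j.+1] with leading coefficient [D a + e ** D a]; once that is central, the
   remainder is of degree [j] with leading coefficient [(a - e ** a) ** D a]. *)
Lemma center_anticomm_of_iter j :
  (forall a, central (iter j (mul^~ a) << D a, a >>)) -> forall a, central << D a, a >>.
Proof.
move=> skewD.
have cg a : central (D a + e ** D a).
  have hl : polyfun 1 (fun t => << D a, a >> + t *: (D a + e ** D a)) (D a + e ** D a).
    by exists << D a, a >>, (fun=> D a + e ** D a).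
  apply: (center_lead_iter_mul_shift (j := j) hl) => t.
  by rewrite -anticomm_shift; apply: skewD.
have cr a : central ((a - e ** a) ** D a).
  apply: (center_lead_iter_mul_shift (j := j) (n := 0) (a := a)) => // t.
  rewrite -(anticomm_split_rest_shift a t); set b := a + t *: e.
  have -> : (b - e ** b) ** D b = << D b, b >> - (D b + e ** D b) ** b.
    by rewrite anticomm_split [_ + _ ** D b]addrC addrK.
  by rewrite iter_mulB; apply: centerB (skewD b) (center_iter _ _ (centerMr _ (cg b))).
by move=> a; rewrite anticomm_split; apply: centerD (centerMr _ (cg a)) (cr a).
Qed.

End LinearVanishingAtIdentity.

Variables (delta d : V -> V) (lin_d : linear d)
  (deltaM : forall a b, delta (a ** b) = a ** delta b + d a ** b).

Lemma deltaE a : delta a = a ** delta e + d a.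
Proof. by rewrite -{1}(mulr_e a) deltaM mulr_e. Qed.

Lemma k_skew_at_right_identity k : k_skew_centralizing mul delta k.+1 ->
  central (delta e) /\ d e = 0.
Proof.
move=> /k_skew_centralizingE /(_ e); rewrite iter_fix ?mulr_e // /anticomm mulr_e.
set w := delta e => cw.
have ew : e ** w = w.
  by apply: (addIr (e ** w)); have := cw e; rewrite mulDr -mulA mulr_e mulr_e.
have {}cw : central w.
  have /(centerZ 2^-1) := cw; rewrite ew -mulr2n -scaler_nat scalerA.
  by rewrite mulVf ?pnatr_eq0 // scale1r.
split=> //; apply: (addrI w).
by rewrite addr0 -{1}ew -deltaE.
Qed.

Lemma skew_centralizing_of_k_skew k :
  k_skew_centralizing mul delta k.+1 -> skew_centralizing mul delta.
Proof.
move=> skew_k; have [cw de] := k_skew_at_right_identity skew_k.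
have /k_skew_centralizingE skew_iter := skew_k.
have anticomm_deltaE a : << delta a, a >> = << a ** delta e, a >> + << d a, a >>.
  by rewrite deltaE /anticomm mulDl mulDr addrACA.
have cq a : central << a ** delta e, a >>.
  by apply: centerD; rewrite -?mulA -cw; do !apply: centerMr.
have cd : forall a, central << d a, a >>.
  apply: (center_anticomm_of_iter lin_d de (j := k)) => b.
  have -> : << d b, b >> = << delta b, b >> - << b ** delta e, b >>.
    by rewrite anticomm_deltaE [_ + << d b, b >>]addrC addrK.
  by rewrite iter_mulB; apply: centerB (skew_iter b) (center_iter _ _ (cq b)).
by move=> a; rewrite anticomm_deltaE; apply: centerD (cq a) (cd a).
Qed.

End SkewCentralizing.
Unset Implicit Arguments.

Theorem corollary5p3 (R : realType) (V : completeNormedModType R[i])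
  (mul : V -> V -> V) (delta d : V -> V) :
  banach_algebra_mul mul ->
  (forall x : V, jacobson_rad mul x <-> rann mul x) ->
  quotient_rad_commutative mul ->
  has_right_identity mul ->
  generalized_derivation mul delta d ->
  [/\ (skew_centralizing mul delta ->
         forall k : nat, (0 < k)%N -> k_skew_centralizing mul delta k),
      ((forall k : nat, (0 < k)%N -> k_skew_centralizing mul delta k) ->
         exists2 k : nat, (0 < k)%N & k_skew_centralizing mul delta k)
    & ((exists2 k : nat, (0 < k)%N & k_skew_centralizing mul delta k) ->
         skew_centralizing mul delta)].
Proof.
move=> [mulA [mulDl [mulDr [mulZl [mulZr _]]]]] rad_rann comm_rad [e mulr_e].
move=> [[lin_d _] [_ deltaM]].
have mul_swap := mul_swap_of_rad_rann mulDr mulZr rad_rann comm_rad.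
split.
- by move=> skew [|k] // _; apply: k_skew_centralizing_of_skew.
- by move=> skew_all; exists 1%N => //; apply: skew_all.
- case=> [[|k]] // _.
  exact: (skew_centralizing_of_k_skew mulA mulDl mulDr mulZl mulZr mul_swap mulr_e
    lin_d deltaM (k := k)).
Qed.
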